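(* Let $c$ be a prime of the form $2^r\cdot 3+1$ ($r\ge1$), and let $a,b>1$ be integers with $a,b,c$ pairwise coprime and $e_c(b)=3$. Suppose positive integers $z,Y,Z$ with $z\le Z$ and $Y\equiv 4\pmod 6$ satisfy $a+b=c^z$ and $a+b^Y=c^Z$, and let $e=\nu_c((Y-1)/3)$. Then $Z\ge 2z-2e$.
   Context: For a positive integer $M$ and an integer $A$ coprime to $M$, $e_M(A)$ denotes the least positive integer $e$ such that $A^e\equiv \pm1\pmod M$. $\nu_c$ is the $c$-adic valuation. *)

From mathcomp Require Import all_boot.
Set Implicit Arguments. Unset Strict Implicit. Unset Printing Implicit Defensive.

(* A^e = +1 or -1 modulo M, for natural numbers (M %| A^e + 1 encodes A^e = -1 mod M). *)
Definition pm1_mod (M A e : nat) : Prop :=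
  A ^ e = 1 %[mod M] \/ M %| A ^ e + 1.

Definition e_mod (M A e : nat) : Prop :=
  0 < e /\ pm1_mod M A e /\ (forall k, 0 < k -> k < e -> ~ pm1_mod M A k).

From mathcomp Require Import all_boot zify.
Set Implicit Arguments. Unset Strict Implicit. Unset Printing Implicit Defensive.

(* Subtracting the two equations gives c^z | b (b^(Y-1) - 1), i.e. c^z | b^(3m) - 1
   with m = (Y-1)/3 odd.  Since b^6 = 1 (mod c) and m is odd, c | b^3 - 1, so lifting
   the exponent gives z <= d + e with d = nu_c(b^3 - 1).  As e_c(b) = 3, c does not
   divide b - 1, so c^d divides b^2 + b + 1 < 2 b^2, and c^(2d) < 4 b^4 <= c b^Y < c^(Z+1)
   forces 2d <= Z. *)

Lemma expn_1Dmul_modsq p t i : (1 + p * t) ^ i = 1 + i * p * t %[mod p ^ 2].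
Proof.
elim: i => [|i IH]; first by rewrite mul0n addn0.
rewrite expnS mulnC -modnMml IH modnMml.
have -> : (1 + i * p * t) * (1 + p * t) = (i * t * t) * p ^ 2 + (1 + i.+1 * p * t).
  by rewrite expnS expn1 mulSn; lia.
by rewrite modnMDl.
Qed.

Lemma sum_expn_1Dmul_modsq p t n :
  \sum_(i < n) (1 + p * t) ^ i = n + p * t * 'C(n, 2) %[mod p ^ 2].
Proof.
elim: n => [|n IH]; first by rewrite big_ord0 muln0.
rewrite big_ord_recr /= -modnDml IH modnDml -modnDmr expn_1Dmul_modsq modnDmr.
by congr (_ %% _); rewrite binS bin1; lia.
Qed.

Lemma sum_expn_mod d E n : E = 1 %[mod d] -> \sum_(i < n) E ^ i = n %[mod d].
Proof.
move=> E_mod; rewrite -modn_summ.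
under eq_bigr do rewrite -modnXm E_mod modnXm exp1n.
by rewrite modn_summ sum1_card card_ord.
Qed.

Lemma logn_eq1_modsq p x : prime p -> x = p %[mod p ^ 2] -> logn p x = 1.
Proof.
move=> p_prime x_mod; have p_gt1 := prime_gt1 p_prime; have p_gt0 := ltnW p_gt1.
have x_def : x = p * (x %/ p ^ 2 * p + 1).
  rewrite {1}(divn_eq x (p ^ 2)) x_mod modn_small; last by rewrite expnS expn1; nia.
  by rewrite expnS expn1; lia.
rewrite x_def lognM ?addn1 // logn_prime // eqxx logn_coprime //.
by rewrite prime_coprime // -addn1 dvdn_addr ?dvdn_mull // dvdn1 neq_ltn p_gt1 orbT.
Qed.

Section LiftingTheExponent.

Variable p : nat.
Hypotheses (p_prime : prime p) (p_odd : odd p).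

Lemma logn_sum_expn_prime E : E = 1 %[mod p] -> logn p (\sum_(i < p) E ^ i) = 1.
Proof.
move=> E_mod; have p_gt1 := prime_gt1 p_prime.
have E_def : E = 1 + p * (E %/ p).
  by rewrite {1}(divn_eq E p) E_mod modn_small //; lia.
apply: logn_eq1_modsq => //.
rewrite E_def sum_expn_1Dmul_modsq bin2odd //.
have -> : p + p * (E %/ p) * (p * p.-1./2) = E %/ p * p.-1./2 * p ^ 2 + p.
  by rewrite expnS expn1; lia.
by rewrite modnMDl.
Qed.

Lemma logn_predX C n : C = 1 %[mod p] -> 1 < C -> 0 < n ->
  logn p (C ^ n).-1 = logn p C.-1 + logn p n.
Proof.
move=> C_mod C_gt1; elim/ltn_ind: n => n IH n_gt0.
have [/dvdnP[n' n_def] | p_ndvd_n] := boolP (p %| n).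
  have n'_gt0 : 0 < n' by move: n_gt0; rewrite n_def muln_gt0 => /andP[].
  have E_mod : C ^ n' = 1 %[mod p] by rewrite -modnXm C_mod modnXm exp1n.
  have sum_logn := logn_sum_expn_prime E_mod.
  have sum_gt0 : 0 < \sum_(i < p) (C ^ n') ^ i.
    by rewrite lt0n; apply/eqP => sum0; rewrite sum0 logn0 in sum_logn.
  have E_gt1 : 1 < C ^ n' by rewrite -(exp1n n') ltn_exp2r.
  have n'_lt_n : n' < n by rewrite n_def -{1}(muln1 n') ltn_mul2l n'_gt0 prime_gt1.
  rewrite n_def expnM predn_exp lognM // ?sum_logn; last by lia.
  rewrite IH // (lognM _ n'_gt0 (prime_gt0 p_prime)).
  by rewrite (logn_prime p p_prime) eqxx addnA.
have sum_ndvd : ~~ (p %| \sum_(i < n) C ^ i) by rewrite /dvdn sum_expn_mod.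
have sum_gt0 : 0 < \sum_(i < n) C ^ i.
  by rewrite lt0n; apply: contra sum_ndvd => /eqP ->.
rewrite predn_exp lognM //; last by lia.
by congr (_ + _); rewrite !logn_coprime ?prime_coprime.
Qed.

End LiftingTheExponent.

Lemma pm1_mod_exp_double M A e : pm1_mod M A e -> A ^ (2 * e) = 1 %[mod M].
Proof.
rewrite mulnC expnM; set x := A ^ e.
case=> [x_mod | M_dvd]; first by rewrite -modnXm x_mod modnXm exp1n.
have sq_mod : (x ^ 2 + x) %% M = 0.
  by rewrite -mulnn -{3}(muln1 x) -mulnDr; apply/eqP/dvdn_mull.
have succ_mod : (x + 1) %% M = 0 by apply/eqP.
have := congr1 (modn^~ M) (addnA (x ^ 2) x 1).
by rewrite /= -(modnDml (x ^ 2 + x)) sq_mod -modnDmr succ_mod addn0.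
Qed.

Lemma expn_odd_mod M A e m :
  A ^ (2 * e) = 1 %[mod M] -> odd m -> A ^ (e * m) = A ^ e %[mod M].
Proof.
move=> sq_mod m_odd.
have -> : e * m = 2 * e * m./2 + e by move: (odd_double_half m); rewrite m_odd; lia.
by rewrite expnD expnM -modnMml -modnXm sq_mod modnXm exp1n modnMml mul1n.
Qed.

Lemma e_mod_not_dvd_pred M A e : 0 < A -> 1 < e -> e_mod M A e -> ~~ (M %| A.-1).
Proof.
move=> A_gt0 e_gt1 [_ [_ minimal]]; apply/negP => M_dvd.
apply: (minimal 1) => //; left; apply/eqP.
by rewrite expn1 eqn_mod_dvd // subn1.
Qed.

Lemma logn_pred_cube p b : prime p -> ~~ (p %| b.-1) ->
  logn p (b ^ 3).-1 = logn p (b ^ 2 + b + 1).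
Proof.
move=> p_prime p_ndvd.
have b_gt1 : 1 < b by case: b p_ndvd => [|[]]; rewrite ?dvdn0.
have -> : (b ^ 3).-1 = b.-1 * (b ^ 2 + b + 1).
  by case: b {p_ndvd b_gt1} => // b; rewrite !expnS expn0; nia.
rewrite lognM ?addn1 //; last by rewrite -subn1 subn_gt0.
by rewrite (logn_coprime (m := b.-1)) ?prime_coprime.
Qed.

Lemma dvd_pred_exp_of_sums a b c z Z Y : coprime b c -> z <= Z ->
  a + b = c ^ z -> a + b ^ Y.+1 = c ^ Z -> c ^ z %| (b ^ Y).-1.
Proof.
move=> cop_bc z_le_Z sum_z sum_Z.
have diff : c ^ Z - c ^ z = b * (b ^ Y).-1.
  by rewrite -subn1 mulnBr muln1 -expnS -sum_Z -sum_z subnDl.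
have : c ^ z %| c ^ Z - c ^ z by rewrite dvdn_sub ?dvdn_exp2l.
by rewrite diff Gauss_dvdr // coprimeXl // coprime_sym.
Qed.

Lemma double_leq_of_pow_bounds c b d Z : 4 <= c -> 1 < b ->
  c ^ d <= b ^ 2 + b + 1 -> b ^ 4 < c ^ Z -> 2 * d <= Z.
Proof.
move=> c_ge4 b_gt1 cd_le bZ.
have c_gt1 : 1 < c by apply: leq_trans c_ge4.
rewrite -ltnS -(ltn_exp2l _ _ c_gt1) mulnC expnM [c ^ Z.+1]expnS.
have cofactor_lt : b ^ 2 + b + 1 < 2 * b ^ 2 by rewrite expnS expn1; nia.
have sq_lt : (c ^ d) ^ 2 < 4 * b ^ 4.
  have -> : 4 * b ^ 4 = (2 * b ^ 2) ^ 2 by rewrite expnMn -expnM.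
  by rewrite ltn_exp2r //; apply: leq_ltn_trans cofactor_lt.
by apply: (leq_trans sq_lt); rewrite leq_mul // ltnW.
Qed.

Theorem mainTheorem10 (c r a b z Y Z : nat) :
  prime c -> 1 <= r -> c = 2 ^ r * 3 + 1 ->
  1 < a -> 1 < b ->
  coprime a b -> coprime a c -> coprime b c ->
  e_mod c b 3 ->
  0 < z -> 0 < Y -> 0 < Z -> z <= Z ->
  Y %% 6 = 4 ->
  a + b = c ^ z -> a + b ^ Y = c ^ Z ->
  2 * z - 2 * logn c ((Y - 1) %/ 3) <= Z.
Proof.
move=> c_prime _ c_def a_gt1 b_gt1 _ _ cop_bc e3 z_gt0 Y_gt0 _ z_le_Z Y_mod sum_z sum_Z.
have c_ge4 : 4 <= c by rewrite c_def; have := @leq_pexp2l 2 0 r isT (leq0n r); lia.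
have c_odd : odd c by case: (even_prime c_prime) => // c2; rewrite c2 in c_ge4.
set m := (Y - 1) %/ 3.
have Y_def : Y = (3 * m).+1 by rewrite /m; lia.
have m_odd : odd m by move: Y_mod; rewrite Y_def /m; lia.
have b3m_gt1 : 1 < b ^ (3 * m).
  by rewrite -{1}[1](expn0 b) ltn_exp2l // muln_gt0 (odd_gt0 m_odd).
have dvd_z : c ^ z %| (b ^ (3 * m)).-1.
  by apply: (dvd_pred_exp_of_sums cop_bc z_le_Z sum_z); rewrite -Y_def.
have b3_mod : b ^ 3 = 1 %[mod c].
  rewrite -(expn_odd_mod _ m_odd); last exact: pm1_mod_exp_double e3.2.1.
  apply/eqP; rewrite eqn_mod_dvd ?subn1 ?(ltnW b3m_gt1) //.
  exact: dvdn_trans (dvdn_exp z_gt0 (dvdnn c)) dvd_z.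
have lte : logn c (b ^ (3 * m)).-1 = logn c (b ^ 3).-1 + logn c m.
  by rewrite expnM logn_predX ?(odd_gt0 m_odd) // -{1}[1](expn0 b) ltn_exp2l.
have z_le : z <= logn c (b ^ 3).-1 + logn c m.
  by rewrite -lte -pfactor_dvdn // -subn1 subn_gt0.
have cofactor_ge : c ^ logn c (b ^ 3).-1 <= b ^ 2 + b + 1.
  rewrite logn_pred_cube ?(e_mod_not_dvd_pred _ _ e3) ?(ltnW b_gt1) //.
  by apply: dvdn_leq; rewrite ?addn1 ?pfactor_dvdnn.
have bZ : b ^ 4 < c ^ Z.
  rewrite -sum_Z -(add0n (b ^ 4)) -addSn leq_add ?(ltnW a_gt1) //.
  by rewrite leq_pexp2l ?(ltnW b_gt1) // Y_def; lia.
have := double_leq_of_pow_bounds c_ge4 b_gt1 cofactor_ge bZ; lia.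
Qed.
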